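(* Let $c\in\mathbb{N}$, let $\delta>1/c$, and let $\mathrm{ALG}$ be a deterministic algorithm for the Halld\'orsson–Szegedy guessing game such that on inputs where $n=k^c$ the cost of $\mathrm{ALG}$ is at most $O(n^{1-\delta})$. Then $\mathrm{ALG}$ must read at least $b=\Omega(n\log n)$ bits of advice.
   Context: The Halld\'orsson–Szegedy guessing game (HSGG) is the following minimization problem. First integers $k\leq n$ with $k$ even are revealed. Then for $i=1,\dots,n$: a set $A_i\subseteq[k]$ of size $k/2$ (available characters) is revealed; the algorithm answers $y_i\in[n]$ subject to: for every $t<i$ with $y_t=y_i$, $x_t\in A_i$; then the correct character $x_i\in A_i$ is revealed. The cost of the output $y_1\cdots y_n$ is $|\{y_1,\dots,y_n\}|$. Advice is read from an infinite tape prepared by an oracle knowing the whole input. *)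

From mathcomp Require Import all_boot.
From Stdlib Require Import Reals.
Set Implicit Arguments. Unset Strict Implicit. Unset Printing Implicit Defensive.

(* Rounds are indexed
   0 .. n-1; round i has available set iA i (a subset of [k] = 'I_k) and
   correct character ix i.  Values at indices >= n are irrelevant. *)
Record hsgg_input := HInput {
  ik : nat;
  inn : nat;
  iA : nat -> {set 'I_ik};
  ix : nat -> 'I_ik
}.

Definition valid_input (I : hsgg_input) : Prop :=
  ~~ odd (ik I) /\ ik I <= inn I /\
  forall i, i < inn I -> #|iA I i| = (ik I)./2 /\ ix I i \in iA I i.

Definition tape := nat -> bool.

(* A deterministic online algorithm with advice: given the advice tape, k, n,
   the available sets A_1..A_i revealed so far and the correct characters
   x_1..x_{i-1} revealed so far, it answers y_i (a natural number; validity
   requires y_i < n, i.e. y_i in [n] up to the shift 1..n -> 0..n-1). *)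
Definition hsgg_alg :=
  tape -> forall k n : nat, seq {set 'I_k} -> seq 'I_k -> nat.

Definition answer (alg : hsgg_alg) (I : hsgg_input) (phi : tape) (i : nat) : nat :=
  alg phi (ik I) (inn I) [seq iA I j | j <- iota 0 i.+1] [seq ix I j | j <- iota 0 i].

Definition valid_output (alg : hsgg_alg) (I : hsgg_input) (phi : tape) : Prop :=
  forall i, i < inn I ->
    answer alg I phi i < inn I /\
    forall t, t < i -> answer alg I phi t = answer alg I phi i -> ix I t \in iA I i.

Definition cost (alg : hsgg_alg) (I : hsgg_input) (phi : tape) : nat :=
  size (undup [seq answer alg I phi i | i <- iota 0 (inn I)]).

(* On input I with tape phi the algorithm reads (at most) the first b bits:
   its whole output is unchanged by any modification of the tape beyond
   position b. *)
Definition reads_within (alg : hsgg_alg) (I : hsgg_input) (phi : tape) (b : nat) : Prop :=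
  forall psi : tape, (forall j, j < b -> psi j = phi j) ->
    forall i, i < inn I -> answer alg I psi i = answer alg I phi i.

(* Fix an advice string and view the algorithm as a deterministic guesser.  Call a round bad if
   its answer y already labels at least T revealed characters, or if its correct character was
   already revealed under y.  Each answer labels fewer than T good rounds, so with cost at most M
   every input admits an advice string under which at least n - M T rounds are bad.
   Conversely, a bad round needs the next available set A to contain a large set of characters
   already revealed under one of the at most n earlier answers, which happens for a 2^-T
   fraction of the sets A only, or needs the correct character to be one of fewer than T
   candidates.  So the potential b^(#bad rounds), averaged over the N legal next rounds, at most
   doubles when 2 n b <= 2^T and 2 T b <= k/2; summing over all N^n histories and all 2^B
   advice strings gives b^(n - M T) <= 2^n 2^B.  With T = b ~ k^(1/4) and M = O(k^(c-1)), which
   is where delta > 1/c enters, this forces B = Omega(n log k) = Omega(n log n). *)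

From mathcomp Require Import all_boot zify.
Set Implicit Arguments. Unset Strict Implicit. Unset Printing Implicit Defensive.

Lemma double_bin_halfS_le h s : s < h ->
  2 * 'C(h.*2 - s.+1, h - s.+1) <= 'C(h.*2 - s, h - s).
Proof.
move=> hs; have := mul_bin_diag (h.*2 - s) (h - s.+1).
have -> : (h.*2 - s).-1 = h.*2 - s.+1 by lia.
have -> : (h - s.+1).+1 = h - s by lia.
move=> Ebin; have hpos : 0 < h - s by lia.
rewrite -(leq_pmul2l hpos) mulnA (mulnC (h - s) 2) -Ebin leq_mul2r.
by apply/orP; right; lia.
Qed.

Lemma expn2_bin_half_le h s : s <= h -> 2 ^ s * 'C(h.*2 - s, h - s) <= 'C(h.*2, h).
Proof.
elim: s => [|s IHs] hs; first by rewrite expn0 mul1n !subn0.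
apply: leq_trans (IHs (ltnW hs)).
by rewrite expnS -mulnA mulnCA leq_pmul2l ?expn_gt0 // double_bin_halfS_le.
Qed.

Lemma draws_superset_le (T : finType) h (Y : {set T}) : #|T| = h.*2 ->
  2 ^ #|Y| * #|[set A : {set T} | (#|A| == h) && (Y \subset A)]| <= 'C(#|T|, h).
Proof.
move=> cardT; set S := [set A | _].
have [leYh | ltYh] := leqP #|Y| h; last first.
  suff -> : S = set0 by rewrite cards0 muln0.
  apply/setP=> A; rewrite !inE; apply/negP=> /andP[/eqP cardA sYA].
  by have := subset_leq_card sYA; rewrite cardA leqNgt ltYh.
have -> : #|S| = #|[set A :\: Y | A in S]|.
  rewrite card_in_imset // => A B; rewrite !inE => /andP[_ sYA] /andP[_ sYB] eqD.
  by rewrite -(setID A Y) -(setID B Y) (setIidPr sYA) (setIidPr sYB) eqD.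
apply: leq_trans (_ : 2 ^ #|Y| * 'C(#|~: Y|, h - #|Y|) <= _).
  rewrite leq_mul2l -cards_draws; apply/orP; right.
  apply: subset_leq_card; apply/subsetP=> B /imsetP[A].
  rewrite /S inE => /andP[/eqP cardA sYA] ->.
  by rewrite inE (cardsDS sYA) cardA eqxx andbT; apply/subsetP=> x; rewrite !inE => /andP[].
have -> : #|~: Y| = h.*2 - #|Y| by have := cardsC Y; lia.
by rewrite cardT expn2_bin_half_le.
Qed.

Lemma bad_choices_le (V : finType) h T (A X : {set V}) : #|A| = h ->
  \sum_(x in A) ((X \subset A) && ((T <= #|X|) || (x \in X)) : nat)
    <= h * ((T <= #|X|) && (X \subset A)) + T.
Proof.
move=> cardA; case: (leqP T #|X|) => lT /=.
  rewrite (eq_bigr (fun _ => (X \subset A : nat))) => [|x _]; last by rewrite andbT.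
  by rewrite sum_nat_const -cardA mulnC leq_addr.
apply: leq_trans (_ : \sum_(x in A) (x \in X : nat) <= _).
  by apply: leq_sum => x _; case: (X \subset A).
rewrite muln0 add0n; apply: leq_trans (ltnW lT).
rewrite -sum1_card big_mkcond [X in _ <= X]big_mkcond /=.
by apply: leq_sum => x _; case: (x \in A); case: (x \in X).
Qed.

Lemma take_rcons (T : Type) (s : seq T) x t : t <= size s -> take t (rcons s x) = take t s.
Proof.
move=> le_ts; rewrite -cats1 take_cat; case: ltnP => // ge_ts.
have -> : t = size s by lia.
by rewrite subnn take0 cats0 take_size.
Qed.

Lemma iota0S n : iota 0 n.+1 = rcons (iota 0 n) n.
Proof. by rewrite -addn1 iotaD add0n cats1. Qed.

Section Game.
Variable k : nat.

Definition round := ({set 'I_k} * 'I_k)%type.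
Definition legal_round h (r : round) := (#|r.1| == h) && (r.2 \in r.1).
(* A deterministic algorithm with fixed advice: its answer depends on the rounds played so far
   and on the current set of available characters. *)
Definition guesser := seq round -> {set 'I_k} -> nat.

Lemma sum_legal_round h : k = h.*2 -> \sum_(r : round | legal_round h r) 1 = h * 'C(k, h).
Proof.
move=> k_half; rewrite /legal_round.
rewrite -(pair_big_dep (fun A : {set 'I_k} => #|A| == h) (fun A x => x \in A) (fun _ _ => 1)) /=.
rewrite (eq_bigr (fun _ => h)); last by move=> A /eqP <-; rewrite sum1_card.
by rewrite sum_nat_const -cardsE card_draws card_ord mulnC.
Qed.

Section OneGuesser.
Variables (D : guesser) (r0 : round).

Definition label (s : seq round) t := D (take t s) (nth r0 s t).1.

Definition revealed (s : seq round) j : {set 'I_k} :=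
  [set x | has (fun u => (label s u == j) && ((nth r0 s u).2 == x)) (iota 0 (size s))].

Definition consistent s :=
  all (fun t => revealed (take t s) (label s t) \subset (nth r0 s t).1) (iota 0 (size s)).

Definition bad_round T s t :=
  (T <= #|revealed (take t s) (label s t)|) || ((nth r0 s t).2 \in revealed (take t s) (label s t)).

Definition nbad T s := count (bad_round T s) (iota 0 (size s)).

Definition potential T b s := consistent s * b ^ nbad T s.

Definition bad_extension T s (r : round) :=
  (revealed s (D s r.1) \subset r.1) &&
  ((T <= #|revealed s (D s r.1)|) || (r.2 \in revealed s (D s r.1))).

Lemma label_take s t u : u < t -> label (take t s) u = label s u.
Proof. by move=> ut; rewrite /label (take_takel _ (ltnW ut)) (nth_take _ ut). Qed.

Lemma label_rcons s r t : t < size s -> label (rcons s r) t = label s t.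
Proof. by move=> ts; rewrite /label nth_rcons ts take_rcons // ltnW. Qed.

Lemma label_rcons_size s r : label (rcons s r) (size s) = D s r.1.
Proof. by rewrite /label nth_rcons ltnn eqxx take_rcons // take_size. Qed.

Lemma revealedP s j x :
  reflect (exists2 u, u < size s & label s u = j /\ (nth r0 s u).2 = x) (x \in revealed s j).
Proof.
rewrite inE; apply: (iffP hasP) => [[u]|[u us [lu xu]]].
  by rewrite mem_iota add0n => /andP[_ us] /andP[/eqP lu /eqP xu]; exists u.
by exists u; rewrite ?mem_iota ?add0n ?us ?lu ?xu ?eqxx.
Qed.

Lemma revealed_takeP s t j x :
  reflect (exists2 u, (u < t) && (u < size s) & label s u = j /\ (nth r0 s u).2 = x)
          (x \in revealed (take t s) j).
Proof.
apply: (iffP (revealedP _ _ _)) => [[u]|[u /andP[ut us]]].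
  rewrite size_take_min leq_min => /andP[ut us].
  by rewrite label_take // nth_take //; exists u; rewrite ?ut ?us.
by rewrite -(label_take s ut) -(nth_take r0 ut); exists u; rewrite // size_take_min leq_min ut.
Qed.

Lemma consistent_rcons s r :
  consistent (rcons s r) = consistent s && (revealed s (D s r.1) \subset r.1).
Proof.
rewrite /consistent size_rcons iota0S all_rcons andbC take_rcons // take_size.
rewrite label_rcons_size nth_rcons ltnn eqxx; congr andb.
apply: eq_in_all => t; rewrite mem_iota add0n => /andP[_ ts].
by rewrite (take_rcons _ (ltnW ts)) label_rcons // nth_rcons ts.
Qed.

Lemma nbad_rcons T s r :
  nbad T (rcons s r) =
    nbad T s + ((T <= #|revealed s (D s r.1)|) || (r.2 \in revealed s (D s r.1))).
Proof.
rewrite /nbad size_rcons iota0S -[rcons (iota _ _) _]cats1 count_cat /= addn0; congr addn.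
  apply: eq_in_count => t; rewrite mem_iota add0n => /andP[_ ts].
  by rewrite /bad_round (take_rcons _ (ltnW ts)) label_rcons // nth_rcons ts.
by rewrite /bad_round take_rcons // take_size label_rcons_size nth_rcons ltnn eqxx.
Qed.

Definition labels s := undup [seq label s t | t <- iota 0 (size s)].

Lemma revealed_grow s t t' : t < t' -> t < size s -> label s t = label s t' ->
    (nth r0 s t).2 \notin revealed (take t s) (label s t) ->
  #|revealed (take t s) (label s t)| < #|revealed (take t' s) (label s t')|.
Proof.
move=> tt' ts eq_l fresh; apply: proper_card; apply/properP; split.
  apply/subsetP=> x /revealed_takeP[u /andP[ut us] [lu xu]].
  by apply/revealed_takeP; exists u; rewrite ?us ?(ltn_trans ut tt') -?eq_l.
by exists (nth r0 s t).2 => //; apply/revealed_takeP; exists t; rewrite ?tt' ?ts.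
Qed.

(* A good round of label j enlarges the set revealed under j, which stays below T. *)
Lemma count_good_rounds T s :
  count (predC (bad_round T s)) (iota 0 (size s)) <= size (labels s) * T.
Proof.
set f := fun t => (label s t, #|revealed (take t s) (label s t)|).
rewrite -size_filter -(size_map f).
apply: (@leq_trans (size [seq (j, m) | j <- labels s, m <- iota 0 T])); last first.
  by rewrite size_allpairs size_iota.
apply: uniq_leq_size.
  rewrite map_inj_in_uniq ?filter_uniq ?iota_uniq // => t t'.
  rewrite !mem_filter !mem_iota /= /bad_round !negb_or -!ltnNge !add0n.
  move=> /andP[/andP[_ ft] ts] /andP[/andP[_ ft'] ts'] [eq_l eq_m].
  case: (ltngtP t t') => // lt_tt'.
    by have := revealed_grow lt_tt' ts eq_l ft; rewrite eq_m ltnn.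
  by have := revealed_grow lt_tt' ts' (esym eq_l) ft'; rewrite eq_m ltnn.
move=> z /mapP[t]; rewrite mem_filter mem_iota /= /bad_round negb_or -ltnNge add0n.
move=> /andP[/andP[ltT _] ts] ->.
apply/allpairsP; exists (f t); split; rewrite ?mem_iota //.
by rewrite mem_undup; apply/mapP; exists t; rewrite ?mem_iota.
Qed.

Lemma nbad_ge T s : size s - size (labels s) * T <= nbad T s.
Proof.
have := count_good_rounds T s.
have := count_predC (bad_round T s) (iota 0 (size s)).
rewrite size_iota /nbad; lia.
Qed.

Section Potential.
Variables (h T b : nat).
Hypotheses (k_half : k = h.*2) (T_gt0 : 0 < T) (bT_le : 2 * T * b <= h).

Lemma large_revealed_sets s :
  2 ^ T * #|[set A : {set 'I_k} |
              [&& #|A| == h, T <= #|revealed s (D s A)| & revealed s (D s A) \subset A]]|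
  <= size s * 'C(k, h).
Proof.
set S := [set A | _].
pose supsets j := [set A : {set 'I_k} | (#|A| == h) && (revealed s j \subset A)].
have cover : #|S| <= \sum_(j <- labels s | T <= #|revealed s j|) #|supsets j|.
  rewrite -sum1_card big_mkcond /=.
  apply: leq_trans (_ : \sum_A \sum_(j <- labels s | T <= #|revealed s j|)
                          (A \in supsets j : nat) <= _); last first.
    by rewrite exchange_big /=; apply: leq_sum => j _; rewrite -sum1_card [X in _ <= X]big_mkcond.
  apply: leq_sum => A _; case: ifP => // /[!inE] /and3P[cardA lT sA].
  have /set0Pn[x /revealedP[u us [lu _]]] : revealed s (D s A) != set0.
    by rewrite -card_gt0 (leq_trans T_gt0 lT).
  have lab_in : D s A \in labels s.
    by rewrite mem_undup; apply/mapP; exists u; rewrite ?mem_iota.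
  by rewrite big_mkcond (bigD1_seq _ lab_in (undup_uniq _ : uniq (labels s))) /= lT inE cardA sA.
apply: leq_trans (_ : 2 ^ T * \sum_(j <- labels s | T <= #|revealed s j|) #|supsets j| <= _).
  by rewrite leq_mul2l cover orbT.
rewrite big_distrr /=.
apply: leq_trans (_ : \sum_(j <- labels s) 'C(k, h) <= _).
  rewrite [X in _ <= X](bigID (fun j => T <= #|revealed s j|)) /=.
  apply: leq_trans (leq_addr _ _); apply: leq_sum => j lT.
  have := @draws_superset_le _ h (revealed s j); rewrite card_ord => /(_ k_half).
  by apply: leq_trans; rewrite leq_mul2r leq_pexp2l ?orbT.
rewrite big_const_seq count_predT iter_addn_0 mulnC leq_mul2r; apply/orP; right.
by apply: leq_trans (size_undup _) _; rewrite size_map size_iota.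
Qed.

Lemma bad_extensions_le s : 2 * size s * b <= 2 ^ T ->
  b * \sum_(r : round | legal_round h r) (bad_extension T s r : nat) <= h * 'C(k, h).
Proof.
move=> sb_le; set X := fun A => revealed s (D s A).
rewrite /legal_round -(pair_big_dep (fun A : {set 'I_k} => #|A| == h) (fun A x => x \in A)
  (fun A x => bad_extension T s (A, x) : nat)) /=.
apply: (@leq_trans (b * \sum_(A : {set 'I_k} | #|A| == h)
                          (h * ((T <= #|X A|) && (X A \subset A)) + T))).
  rewrite leq_mul2l; apply/orP; right; apply: leq_sum => A /eqP cardA.
  exact: (bad_choices_le T (X A) cardA).
rewrite big_split /= sum_nat_const -cardsE card_draws card_ord -big_distrr /=.
set G := \sum_(A | _) _.
have -> : G = #|[set A : {set 'I_k} | [&& #|A| == h, T <= #|X A| & X A \subset A]]|.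
  rewrite /G -sum1_card [RHS]big_mkcond [LHS]big_mkcond; apply: eq_bigr => A _.
  by rewrite inE; case: (#|A| == h).
move: (large_revealed_sets s) => {G}; set G := #|_| => large.
have GC : 2 * b * G <= 'C(k, h).
  rewrite -(@leq_pmul2l (2 ^ T)) ?expn_gt0 //.
  apply: leq_trans (_ : 2 * b * (size s * 'C(k, h)) <= _).
    by rewrite mulnCA leq_mul2l large orbT.
  by rewrite mulnA [2 * b * _]mulnC mulnA leq_mul2r (mulnC _ 2) sb_le orbT.
have TC : 2 * b * T * 'C(k, h) <= h * 'C(k, h).
  by rewrite leq_mul2r -mulnA (mulnC b) mulnA bT_le orbT.
nia.
Qed.

Lemma potential_step s : 2 * size s * b <= 2 ^ T ->
  \sum_(r : round | legal_round h r) potential T b (rcons s r)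
    <= 2 * (h * 'C(k, h)) * potential T b s.
Proof.
move=> sb_le; rewrite /potential.
case cons_s: (consistent s); last by rewrite big1 // => r _; rewrite consistent_rcons cons_s.
apply: (@leq_trans (\sum_(r : round | legal_round h r)
                      b ^ nbad T s * (1 + b * bad_extension T s r))).
  apply: leq_sum => r _.
  rewrite consistent_rcons cons_s nbad_rcons expnD /= /bad_extension.
  case: (_ \subset r.1) => /=; last by rewrite mul0n.
  rewrite mul1n leq_mul2l; apply/orP; right.
  by case: (_ || _); rewrite ?expn1 ?expn0 ?muln1 ?muln0 ?addn0 // add1n.
rewrite -big_distrr /= big_split /= -big_distrr /= mul1n [leqRHS]mulnC leq_mul2l; apply/orP; right.
by rewrite sum_legal_round // mul2n -addnn leq_add2l bad_extensions_le.
Qed.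

End Potential.
End OneGuesser.

Fixpoint legal_histories h n : seq (seq round) :=
  if n is n'.+1 then
    [seq rcons p.1 p.2 | p <- [seq (s, r) | s <- legal_histories h n', r <- enum (legal_round h)]]
  else [:: [::]].

Lemma legal_historiesP h n s :
  s \in legal_histories h n -> size s = n /\ all (legal_round h) s.
Proof.
elim: n s => [|n IHn] s /=; first by rewrite inE => /eqP ->.
case/mapP=> _ /allpairsP[[s' r] /= [s'_in r_in ->]] ->.
have [size_s' legal_s'] := IHn _ s'_in.
by rewrite size_rcons size_s' all_rcons legal_s' andbT; rewrite mem_enum in r_in.
Qed.

Lemma size_legal_histories h n :
  size (legal_histories h n) = #|legal_round h : {pred round}| ^ n.
Proof. by elim: n => [|n IHn] //=; rewrite size_map size_allpairs IHn -cardE expnS mulnC. Qed.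

Section Counting.
Variables (h T b n : nat).
Hypotheses (k_half : k = h.*2) (T_gt0 : 0 < T) (bT_le : 2 * T * b <= h)
  (nb_le : 2 * n * b <= 2 ^ T).

Lemma sum_potential_le (D : guesser) r0 i : i <= n ->
  \sum_(s <- legal_histories h i) potential D r0 T b s <= (2 * (h * 'C(k, h))) ^ i.
Proof.
elim: i => [|i IHi] le_in; first by rewrite /= big_seq1 /potential /consistent /nbad /= muln1.
rewrite /= big_map big_allpairs expnS.
apply: (@leq_trans (\sum_(s <- legal_histories h i)
                      2 * (h * 'C(k, h)) * potential D r0 T b s)); last first.
  by rewrite -big_distrr /= leq_mul2l IHi 1?ltnW ?orbT.
rewrite big_seq_cond [X in _ <= X]big_seq_cond; apply: leq_sum => s /andP[s_in _].
rewrite big_enum /=; apply: potential_step => //; apply: leq_trans nb_le.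
by have [-> _] := legal_historiesP s_in; rewrite !leq_mul2r leq_mul2l ltnW ?orbT.
Qed.

Lemma advice_count (S : finType) (Ds : S -> guesser) r0 q : 0 < h -> 0 < b ->
  (forall s, size s = n -> all (legal_round h) s ->
     exists a, consistent (Ds a) r0 s /\ q <= nbad (Ds a) r0 T s) ->
  b ^ q <= 2 ^ n * #|S|.
Proof.
move=> h_gt0 b_gt0 hard.
set N := h * 'C(k, h).
have N_gt0 : 0 < N by rewrite muln_gt0 h_gt0 bin_gt0 k_half -addnn leq_addr.
have cardN : #|legal_round h : {pred round}| = N by rewrite /N -(sum_legal_round k_half) -sum1_card.
have upper : \sum_(s <- legal_histories h n) \sum_(a : S) potential (Ds a) r0 T b s
             <= #|S| * (2 * N) ^ n.
  rewrite exchange_big /= -sum_nat_const; apply: leq_sum => a _.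
  exact: sum_potential_le.
have lower : \sum_(s <- legal_histories h n) b ^ q
             <= \sum_(s <- legal_histories h n) \sum_(a : S) potential (Ds a) r0 T b s.
  rewrite big_seq_cond [X in _ <= X]big_seq_cond; apply: leq_sum => s /andP[s_in _].
  have [size_s legal_s] := legal_historiesP s_in.
  have [a [cons_a q_le]] := hard s size_s legal_s.
  rewrite (bigD1 a) //=; apply: leq_trans (leq_addr _ _).
  by rewrite /potential cons_a mul1n leq_pexp2l.
have := leq_trans lower upper.
rewrite big_const_seq count_predT iter_addn_0 size_legal_histories cardN expnMn.
by rewrite mulnA (mulnC #|S|) leq_pmul2r ?expn_gt0 ?N_gt0.
Qed.

End Counting.
End Game.

Definition tape_of B (a : {ffun 'I_B -> bool}) : tape :=
  fun j => if insub j is Some o then a o else false.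

Lemma tape_of_prefix B (phi : tape) j : j < B -> tape_of [ffun o : 'I_B => phi (val o)] j = phi j.
Proof. by move=> jB; rewrite /tape_of insubT /= ffunE. Qed.

Definition advice_guesser (alg : hsgg_alg) k n B (a : {ffun 'I_B -> bool}) : guesser k :=
  fun s A => alg (tape_of a) k n (rcons (map fst s) A) (map snd s).

Definition input_of k n (r0 : round k) (s : seq (round k)) : hsgg_input :=
  HInput n (fun i => (nth r0 s i).1) (fun i => (nth r0 s i).2).

Lemma answer_input_of (alg : hsgg_alg) k n B (a : {ffun 'I_B -> bool}) r0 (s : seq (round k)) t :
  t < size s -> answer alg (input_of n r0 s) (tape_of a) t = label (advice_guesser alg n a) r0 s t.
Proof.
move=> ts; rewrite /answer /label /advice_guesser iota0S map_rcons /input_of /=.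
have map_take (T : Type) (f : round k -> T) :
    [seq f (nth r0 s j) | j <- iota 0 t] = map f (take t s).
  by rewrite -(map_nth_iota0 r0 (ltnW ts)) -map_comp.
by rewrite (map_take _ fst) (map_take _ snd).
Qed.

Lemma reads_within_le (alg : hsgg_alg) I phi b B :
  b <= B -> reads_within alg I phi b -> reads_within alg I phi B.
Proof.
by move=> le_bB read_b psi eq_psi; apply: read_b => j jb; apply: eq_psi (leq_trans jb le_bB).
Qed.

(* A legal history of length n is itself a valid input, on which the guesser built from the
   oracle's first B advice bits answers exactly as the algorithm does. *)
Lemma hsgg_count_bound (alg : hsgg_alg) (oracle : hsgg_input -> tape) k n M r B :
  ~~ odd k -> 0 < k -> k <= n -> 0 < r ->
  2 * n * r <= 2 ^ r -> 2 * r * r <= k./2 ->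
  (forall I, valid_input I -> valid_output alg I (oracle I)) ->
  (forall I, valid_input I -> ik I = k -> inn I = n -> cost alg I (oracle I) <= M) ->
  (forall I, valid_input I -> ik I = k -> inn I = n -> reads_within alg I (oracle I) B) ->
  r ^ (n - M * r) <= 2 ^ n * 2 ^ B.
Proof.
move=> even_k k_gt0 kn r_gt0 nr_le rr_le alg_valid cost_le reads.
have k_half : k = k./2.*2 by rewrite even_halfK.
have h_gt0 : 0 < k./2 by rewrite -double_gt0 -k_half.
pose r0 : round k := (set0, Ordinal k_gt0).
have -> : 2 ^ B = #|{ffun 'I_B -> bool}| by rewrite card_ffun card_bool card_ord.
apply: (advice_count (Ds := advice_guesser alg n (B:=B)) (r0 := r0)
         k_half r_gt0 rr_le nr_le h_gt0 r_gt0).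
move=> s size_s legal_s; set I := input_of n r0 s.
have valid_I : valid_input I.
  split=> //; split=> // i /=; rewrite -size_s => si.
  by have /andP[/eqP -> ->] := all_nthP r0 legal_s i si.
set a := [ffun o : 'I_B => oracle I (val o)].
have answerE t : t < n -> answer alg I (oracle I) t = label (advice_guesser alg n a) r0 s t.
  move=> tn; rewrite -answer_input_of ?size_s //; symmetry.
  by apply: reads => // j jB; apply: tape_of_prefix.
exists a; split.
  apply/allP => t; rewrite mem_iota add0n size_s => /andP[_ tn].
  apply/subsetP=> x /revealed_takeP[u /andP[ut _] [lu <-]].
  have [_ rule] := alg_valid I valid_I t tn.
  have u_n : u < n := ltn_trans ut tn.
  by apply: (rule u ut); rewrite !answerE // lu.
apply: leq_trans (nbad_ge _ _ _ _); rewrite size_s leq_sub2l // leq_mul2r.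
apply/orP; right; apply: leq_trans (cost_le I valid_I erefl erefl).
rewrite /cost /labels size_s /=; apply/eq_leq; congr (size (undup _)).
by apply/eq_in_map => t; rewrite mem_iota => /andP[_ /answerE].
Qed.

Lemma leq_exp2rW m n e : m <= n -> m ^ e <= n ^ e.
Proof. by move=> le_mn; elim: e => // e IHe; rewrite !expnS leq_mul. Qed.

Lemma leq_mul_exp2 e j : 2 * e + 2 <= j -> j.+1 * e <= 2 ^ j.
Proof.
elim: j => [|j IHj]; first by lia.
rewrite leq_eqVlt => /orP[/eqP <- | lt_j]; last by have := IHj lt_j; rewrite expnS; lia.
have : e.+1 ^ 2 <= (2 ^ e) ^ 2 by rewrite leq_exp2r // ltn_expl.
rewrite -expnM mulnC expnD (expnS _ 1) expn1 mulnC.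
by move: (2 ^ (2 * e)) => P; nia.
Qed.

Lemma expn_le_exp2 e r : 2 ^ (2 * e + 2) <= r -> r ^ e <= 2 ^ r.
Proof.
move=> le_r; have r_gt0 : 0 < r by apply: leq_trans le_r; rewrite expn_gt0.
set j := trunc_log 2 r.
have le_jr := trunc_logP (isT : 1 < 2) r_gt0.
have lt_rj := trunc_log_ltn r (isT : 1 < 2).
have le_j : 2 * e + 2 <= j by rewrite -ltnS -(@ltn_exp2l 2) // (leq_ltn_trans le_r).
apply: leq_trans (_ : (2 ^ j.+1) ^ e <= _); first exact/leq_exp2rW/ltnW.
by rewrite -expnM leq_exp2l // (leq_trans (leq_mul_exp2 le_j)).
Qed.

Lemma expnS_le_exp2 e r : 2 ^ (4 * e + 2) <= r -> r.+1 ^ e <= 2 ^ r.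
Proof.
move=> le_r; have r_ge2 : 2 <= r by apply: leq_trans le_r; rewrite -[2]/(2 ^ 1) leq_exp2l //; lia.
apply: leq_trans (_ : r ^ (2 * e) <= _); last first.
  by apply: expn_le_exp2; apply: leq_trans le_r; rewrite leq_exp2l //; lia.
by rewrite expnM; apply: leq_exp2rW; rewrite (expnS _ 1) expn1; nia.
Qed.

Lemma exists_root4 k : exists r, r ^ 4 <= k < r.+1 ^ 4.
Proof.
elim: k => [|k [r /andP[le_rk lt_kr]]]; first by exists 0.
have [lt_k1 | le_k1] := ltnP k.+1 (r.+1 ^ 4); first by exists r; rewrite lt_k1 (leq_trans le_rk).
by exists r.+1; rewrite le_k1 (leq_ltn_trans lt_kr) // ltn_exp2r.
Qed.

Lemma root4_params c M k r : 0 < c -> ~~ odd k -> r ^ 4 <= k < r.+1 ^ 4 ->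
  2 ^ (4 * (4 * c + 2) + 2) <= r -> 2 * M <= r -> 2 <= r ->
  [/\ 2 * k ^ c * r <= 2 ^ r, 2 * r * r <= k./2,
      2 * (M * k ^ (c - 1) * r) <= k ^ c & k <= 16 * r ^ 4].
Proof.
move=> c_gt0 even_k /andP[le_rk lt_kr] large_r Mr r_ge2.
have r4E : r ^ 4 = (r * r) * (r * r) by rewrite !expnS expn0 muln1 !mulnA.
have rr_k : 4 * (r * r) <= k.
  by apply: leq_trans le_rk; rewrite r4E leq_mul2r (leq_mul r_ge2 r_ge2) orbT.
split.
- apply: leq_trans (expnS_le_exp2 large_r).
  rewrite expnD mulnAC mulnC; apply: leq_mul.
    by rewrite expnM; apply/leq_exp2rW/ltnW.
  by rewrite (expnS _ 1) expn1; nia.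
- by have := even_halfK even_k; lia.
- have [c' ->] : exists c', c = c'.+1 by exists c.-1; rewrite prednK.
  rewrite subSS subn0 expnS; move: (k ^ c') => P.
  have : 2 * M * r <= k by apply: leq_trans rr_k; nia.
  by nia.
- apply: leq_trans (ltnW lt_kr) _.
  by rewrite (_ : 16 = 2 ^ 4) // -expnMn; apply: leq_exp2rW; lia.
Qed.

Lemma expn_le_of_root4 k r n q B : 0 < k -> k <= 16 * r ^ 4 -> n <= 2 * q -> q <= n ->
  r ^ q <= 2 ^ n * 2 ^ B -> k ^ n <= 2 ^ (16 * n + 8 * B).
Proof.
move=> k_gt0 k_le n_le q_le rq_le.
apply: leq_trans (_ : k ^ (2 * q) <= _); first by rewrite leq_pexp2l.
apply: leq_trans (_ : (16 * r ^ 4) ^ (2 * q) <= _); first exact: leq_exp2rW.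
have -> : (16 * r ^ 4) ^ (2 * q) = 2 ^ (8 * q) * (r ^ q) ^ 8.
  by rewrite expnMn (_ : 16 = 2 ^ 4) // -!expnM; congr (_ * _); congr (_ ^ _); lia.
apply: leq_trans (_ : 2 ^ (8 * q) * (2 ^ n * 2 ^ B) ^ 8 <= _).
  by rewrite leq_mul2l leq_exp2rW ?orbT.
by rewrite -!expnD -expnM -expnD leq_exp2l //; lia.
Qed.

Definition root4_threshold c M := (maxn (2 ^ (4 * (4 * c + 2) + 2)) (maxn (2 * M) 2)).+1 ^ 4.

Lemma hsgg_advice_bound_nat (alg : hsgg_alg) (oracle : hsgg_input -> tape) c M k n B :
  0 < c -> ~~ odd k -> n = k ^ c -> root4_threshold c M <= k ->
  (forall I, valid_input I -> valid_output alg I (oracle I)) ->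
  (forall I, valid_input I -> ik I = k -> inn I = n -> cost alg I (oracle I) <= M * k ^ (c - 1)) ->
  (forall I, valid_input I -> ik I = k -> inn I = n -> reads_within alg I (oracle I) B) ->
  k ^ n <= 2 ^ (16 * n + 8 * B).
Proof.
move=> c_gt0 even_k nE large_k alg_valid cost_le reads.
have [r root_r] := exists_root4 k.
have /andP[_ lt_kr] := root_r.
have := leq_ltn_trans large_k lt_kr.
rewrite ltn_exp2r // ltnS => /ltnW; rewrite !geq_max => /and3P[large_r Mr r_ge2].
have [nr_le rr_le Mkr_le k_le] := root4_params c_gt0 even_k root_r large_r Mr r_ge2.
have k_gt0 : 0 < k by apply: leq_trans large_k; rewrite expn_gt0.
have le_kn : k <= n by rewrite nE -{1}(expn1 k) leq_pexp2l.
rewrite -nE in nr_le Mkr_le.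
have := hsgg_count_bound even_k k_gt0 le_kn (ltnW r_ge2) nr_le rr_le alg_valid cost_le reads.
by apply: expn_le_of_root4; rewrite ?leq_subr //; lia.
Qed.

From Stdlib Require Import Reals Lra Classical.

Lemma Nat_powE m e : Nat.pow m e = expn m e.
Proof. by elim: e => //= e ->; rewrite expnS. Qed.

Lemma ln_le x y : (0 < x)%R -> (x <= y)%R -> (ln x <= ln y)%R.
Proof.
move=> x_gt0 /Rle_lt_or_eq_dec [lt_xy | ->]; last exact: Rle_refl.
exact/Rlt_le/ln_increasing.
Qed.

Lemma ln2_lt1 : (ln 2 < 1)%R.
Proof.
rewrite -[X in (_ < X)%R](ln_exp 1); apply: ln_increasing; first lra.
by have := exp_ineq1 1 R1_neq_R0; lra.
Qed.

Lemma exists_nat_floor x : (0 <= x)%R -> exists B : nat, (INR B <= x < INR B + 1)%R.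
Proof.
move=> x_ge0; have floor_ge0 : (0 <= Zfloor x)%Z by apply: Zfloor_lub.
exists (Z.to_nat (Zfloor x)); rewrite INR_IZR_INZ Znat.Z2Nat.id //; exact: Zfloor_bound.
Qed.

Lemma exists_nat_gt x : exists m : nat, (x < INR m)%R.
Proof. by have [m] := INR_archimed 1 x Rlt_0_1; rewrite Rmult_1_r; exists m. Qed.

Lemma cost_le_of_Rpower c k m M (K delta : R) : (0 < c)%N -> (0 < k)%N ->
  (delta > 1 / INR c)%R -> (K <= INR M)%R -> (0 < K)%R ->
  (INR m <= K * Rpower (INR (Nat.pow k c)) (1 - delta))%R -> (m <= M * expn k (c - 1))%N.
Proof.
move=> c_gt0 k_gt0 delta_gt K_le K_gt0 m_le.
have k_ge1 : (1 <= INR k)%R by apply: (le_INR 1); apply/leP.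
have [c' cE] : exists c', c = c'.+1 by exists c.-1; rewrite prednK.
have c_pos : (0 < INR c)%R by apply/lt_0_INR/ltP.
have Rpower_le : (Rpower (INR (Nat.pow k c)) (1 - delta) <= INR k ^ c')%R.
  rewrite pow_INR.
  apply: Rle_trans (_ : (Rpower (INR k ^ c) (1 - / INR c) <= _)%R).
    by apply: Rle_Rpower; [exact: pow_R1_Rle | move: delta_gt; rewrite /Rdiv Rmult_1_l; lra].
  rewrite -Rpower_pow ?Rpower_mult; last lra.
  have -> : (INR c * (1 - / INR c) = INR c')%R by rewrite cE S_INR; field; rewrite -S_INR -cE; lra.
  by rewrite Rpower_pow; [exact: Rle_refl | lra].
apply/leP/INR_le; rewrite cE subSS subn0 -multE mult_INR -Nat_powE pow_INR.
apply: (Rle_trans _ _ _ m_le); apply: Rle_trans (_ : (K * INR k ^ c' <= _)%R).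
  by apply: Rmult_le_compat_l; lra.
by apply: Rmult_le_compat_r; [apply: pow_le; lra | lra].
Qed.

Lemma ln_bound_of_expn_le k n B : (0 < k)%N -> (0 < n)%N -> (48 < ln (INR k))%R ->
  (expn k n <= expn 2 (16 * n + 8 * B))%N -> (INR n * ln (INR k) / 16 < INR B)%R.
Proof.
move=> k_gt0 n_gt0 lnk_gt kn_le.
have k_pos : (0 < INR k)%R by apply/lt_0_INR/ltP.
have n_pos : (0 < INR n)%R by apply/lt_0_INR/ltP.
have B_ge0 := pos_INR B.
have ln_le2 : (INR n * ln (INR k) <= (16 * INR n + 8 * INR B) * ln 2)%R.
  have := le_INR _ _ (elimT leP kn_le); rewrite -!Nat_powE !pow_INR => pow_le.
  have two_pos : (0 < INR 2)%R by rewrite /=; lra.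
  have := ln_le (pow_lt _ _ k_pos) pow_le; rewrite !ln_pow //.
  by rewrite -plusE -!multE plus_INR !mult_INR /=; replace (1 + 1)%R with 2%R; lra.
have ln2_bound : ((16 * INR n + 8 * INR B) * ln 2 < 16 * INR n + 8 * INR B)%R.
  by rewrite -[X in (_ < X)%R]Rmult_1_r; apply: Rmult_lt_compat_l; [lra | exact: ln2_lt1].
have : (INR n * 48 < INR n * ln (INR k))%R by apply: Rmult_lt_compat_l.
lra.
Qed.

Lemma hsgg_advice_lower_bound (alg : hsgg_alg) (oracle : hsgg_input -> tape) c M k n B :
  (0 < c)%N -> ~~ odd k -> n = Nat.pow k c ->
  (root4_threshold c M <= k)%N ->
  (exp 48 < INR k)%R ->
  (forall I, valid_input I -> valid_output alg I (oracle I)) ->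
  (forall I, valid_input I -> ik I = k -> inn I = n ->
     (cost alg I (oracle I) <= M * expn k (c - 1))%N) ->
  (forall I, valid_input I -> ik I = k -> inn I = n -> reads_within alg I (oracle I) B) ->
  (/ (16 * INR c) * INR n * ln (INR n) < INR B)%R.
Proof.
move=> c_gt0 even_k nE large_k k_gt alg_valid cost_le reads.
have k_gt0 : (0 < k)%N by apply: leq_trans large_k; rewrite expn_gt0.
have n_gt0 : (0 < n)%N by rewrite nE Nat_powE expn_gt0 k_gt0.
have c_pos : (0 < INR c)%R by apply/lt_0_INR/ltP.
have lnk_gt : (48 < ln (INR k))%R.
  by rewrite -(ln_exp 48); apply: ln_increasing => //; exact: exp_pos.
have lnnE : ln (INR n) = (INR c * ln (INR k))%R.
  by rewrite nE pow_INR ln_pow //; apply/lt_0_INR/ltP.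
rewrite Nat_powE in nE.
have := ln_bound_of_expn_le k_gt0 n_gt0 lnk_gt
  (hsgg_advice_bound_nat c_gt0 even_k nE large_k alg_valid cost_le reads).
have -> : (/ (16 * INR c) * INR n * ln (INR n) = INR n * ln (INR k) / 16)%R.
  by rewrite lnnE; field; lra.
done.
Qed.

(* The budget B is the floor of x: an input needing more than x bits must need more than B. *)
Lemma exists_input_reading_ge (alg : hsgg_alg) (oracle : hsgg_input -> tape) k n (x : R) :
  (0 <= x)%R ->
  (forall B : nat, (forall I, valid_input I -> ik I = k -> inn I = n ->
                      reads_within alg I (oracle I) B) -> (x < INR B)%R) ->
  exists I, valid_input I /\ ik I = k /\ inn I = n /\
    forall b : nat, reads_within alg I (oracle I) b -> (x <= INR b)%R.
Proof.
move=> x_ge0 budget_gt; apply: NNPP => no_hard_input.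
have [B [B_le lt_B]] := exists_nat_floor x_ge0.
suff : (x < INR B)%R by lra.
apply: budget_gt => I valid_I kI nI; apply: NNPP => not_read.
apply: no_hard_input; exists I; do 3 split => //.
move=> b read_b; apply: Rnot_lt_le => lt_bx; apply: not_read; apply: reads_within_le read_b.
by rewrite -ltnS; apply/ltP/INR_lt; rewrite S_INR; apply: Rlt_trans lt_bx lt_B.
Qed.

Unset Implicit Arguments.

Theorem theorem14 (c : nat) (delta : R) (alg : hsgg_alg)
    (oracle : hsgg_input -> tape) :
  (0 < c)%N ->
  (delta > 1 / INR c)%R ->
  (* ALG (with the oracle's advice) is an algorithm for HSGG *)
  (forall I, valid_input I -> valid_output alg I (oracle I)) ->
  (* on inputs with n = k^c its cost is O(n^(1-delta)) *)
  (exists K : R, exists N0 : nat, (0 < K)%R /\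
     forall I, valid_input I -> inn I = (ik I ^ c)%N -> (N0 <= inn I)%N ->
       (INR (cost alg I (oracle I)) <= K * Rpower (INR (inn I)) (1 - delta))%R) ->
  (* then it reads Omega(n log n) advice bits (worst case over inputs of size n) *)
  exists C : R, exists N1 : nat, (0 < C)%R /\
    forall k n : nat, ~~ odd k -> n = (k ^ c)%N -> (N1 <= n)%N ->
      exists I, valid_input I /\ ik I = k /\ inn I = n /\
        forall b : nat, reads_within alg I (oracle I) b ->
          (C * INR n * ln (INR n) <= INR b)%R.
Proof.
move=> c_gt0 delta_gt alg_valid [K [N0 [K_gt0 cost_bound]]].
have [M K_lt] := exists_nat_gt K.
have [kL kL_gt] := exists_nat_gt (exp 48).
have c_pos : (0 < INR c)%R by apply/lt_0_INR/ltP.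
pose kmin := maxn (root4_threshold c M) kL.
exists (/ (16 * INR c))%R, (maxn N0 (expn kmin c)); split; first by apply: Rinv_0_lt_compat; lra.
move=> k n even_k nE; rewrite geq_max => /andP[N0_le kmin_le].
have : (kmin <= k)%N by rewrite -(leq_exp2r _ _ c_gt0) -[expn k c]Nat_powE -nE.
rewrite geq_max => /andP[large_k kL_le].
have k_gt0 : (0 < k)%N by apply: leq_trans large_k; rewrite expn_gt0.
apply: exists_input_reading_ge => [|B reads].
  have n_ge1 : (1 <= INR n)%R by apply: (le_INR 1); apply/leP; rewrite nE Nat_powE expn_gt0 k_gt0.
  apply: Rmult_le_pos; last by rewrite -ln_1; apply: ln_le; lra.
  by apply: Rmult_le_pos; [apply/Rlt_le/Rinv_0_lt_compat | ]; lra.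
apply: (hsgg_advice_lower_bound (M := M) c_gt0 even_k nE large_k _ alg_valid _ reads).
  by apply: Rlt_le_trans kL_gt _; apply/le_INR/leP.
move=> I valid_I kI nI; apply: (cost_le_of_Rpower c_gt0 k_gt0 delta_gt (Rlt_le _ _ K_lt) K_gt0).
by rewrite -nE -nI; apply: cost_bound; rewrite // nI ?kI.
Qed.
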